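(* Let $T\ge1$, $K_0=\{x_0\}$, $K_1,\dots,K_T\subseteq\mathbb R$ closed with $\mathrm{card}(K_{t+1})\ge\mathrm{card}(K_t)$ for $t=0,\dots,T-1$, $\Omega=K_0\times\dots\times K_T$. Let $\mathcal E_t\subseteq C_t$ be vector subspaces with $X_t\in\mathcal E_t$ and $\mathcal E_t+\mathbb R=\mathcal E_t$, and $\mathcal E=\mathcal E_0\times\dots\times\mathcal E_T$. If $\varphi,\psi\in\mathcal E$ and $\Delta\in\mathcal H$ satisfy $\sum_{t=0}^T\varphi_t=\sum_{t=0}^T\psi_t+I^\Delta$ on $\Omega$, then there exist constants $k_0,\dots,k_T,h_0,\dots,h_T\in\mathbb R$ with $\psi_t(x_t)=\varphi_t(x_t)+k_tx_t+h_t$ for all $x_t\in K_t$, $t=0,\dots,T$. In particular, if $S_t:\mathcal E_t\to\mathbb R$ ($t=0,\dots,T$) are stock additive, then $\sum_tS_t(\varphi_t)=\sum_tS_t(\psi_t)$, and on $\mathcal V=\mathcal E_0+\dots+\mathcal E_T+\mathcal I$ the map $v=\sum_t\varphi_t+I^\Delta\mapsto S(v):=\sum_tS_t(\varphi_t)$ is well defined, cash additive and integral additive.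
   Context: $X_t(x_t)=x_t$. $C_t$: continuous $\phi:K_t\to\mathbb R$ with $\sup|\phi(x_t)|/(1+|x_t|)<\infty$, regarded as functions on $\Omega$. $\mathcal H$: $\Delta=(\Delta_0,\dots,\Delta_{T-1})$ with $\Delta_t$ bounded continuous on $K_0\times\dots\times K_t$; $I^\Delta(x)=\sum_{t=0}^{T-1}\Delta_t(x_0,\dots,x_t)(x_{t+1}-x_t)$; $\mathcal I=\{I^\Delta:\Delta\in\mathcal H\}$. $p_t:\mathcal E_t\to\mathbb R$ is stock additive if $p_t(0)=0$ and $p_t(\varphi_t+\alpha X_t+\beta)=p_t(\varphi_t)+\alpha x_0+\beta$ for all $\varphi_t\in\mathcal E_t$, $\alpha,\beta\in\mathbb R$. $S$ is cash additive if $S(v+k)=S(v)+k$ for $k\in\mathbb R$, and integral additive if $S(v+I^\Delta)=S(v)$ for all $\Delta\in\mathcal H$. *)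

From HB Require Import structures.
From mathcomp Require Import all_boot all_order all_algebra.
From mathcomp Require Import all_classical all_reals all_analysis.
Unset Printing Implicit Defensive.
Import Order.TTheory GRing.Theory Num.Theory.
Import numFieldNormedType.Exports.
Local Open Scope classical_set_scope.
Local Open Scope ring_scope.

Section Defs.
Context {R : realType}.

(* A function "on K" is encoded as a function R -> R vanishing outside K
   (zero extension), so that equality of elements of C_t is Leibniz equality. *)

Definition inC (K : set R) (f : R -> R) : Prop :=
  {within K, continuous f} /\
  (exists M : R, forall x, K x -> `|f x| <= M * (1 + `|x|)) /\
  (forall x, ~ K x -> f x = 0).

Definition Xfun (K : set R) : R -> R := fun x => if x \in K then x else 0.
Definition cstK (K : set R) (c : R) : R -> R :=
  fun x => if x \in K then c else 0.

Definition good_space (K : set R) (E : set (R -> R)) : Prop :=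
  E `<=` inC K /\
  [/\ E (fun _ => 0),
      (forall f g, E f -> E g -> E (f \+ g)),
      (forall (a : R) f, E f -> E (fun x => a * f x)),
      E (Xfun K) &
      (forall f (c : R), E f -> E (f \+ cstK K c))].

Definition prodK (K : nat -> set R) (t : nat) : set 'rV[R]_t.+1 :=
  [set y | forall i : 'I_t.+1, K (val i) (y ord0 i)].

Definition prefix (x : nat -> R) (t : nat) : 'rV[R]_t.+1 :=
  \row_(i < t.+1) x (val i).

Definition inH (T : nat) (K : nat -> set R)
    (Delta : forall t : nat, 'rV[R]_t.+1 -> R) : Prop :=
  forall t, (t < T)%N ->
    {within prodK K t, continuous (Delta t)} /\
    (exists M : R, forall y, prodK K t y -> `|Delta t y| <= M).

Definition Iint (T : nat) (Delta : forall t : nat, 'rV[R]_t.+1 -> R)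
    (x : nat -> R) : R :=
  \sum_(t < T) Delta t (prefix x t) * (x t.+1 - x t).

Definition inOmega (T : nat) (K : nat -> set R) (x : nat -> R) : Prop :=
  forall t, (t <= T)%N -> K t (x t).

Definition stock_additive (x0 : R) (K : set R) (E : set (R -> R))
    (p : (R -> R) -> R) : Prop :=
  p (fun _ => 0) = 0 /\
  forall f (a b : R), E f ->
    p (fun x => f x + a * Xfun K x + cstK K b x) = p f + a * x0 + b.

Definition represents (T : nat) (K : nat -> set R) (E : nat -> set (R -> R))
    (phi : nat -> R -> R) (Delta : forall t : nat, 'rV[R]_t.+1 -> R)
    (v : (nat -> R) -> R) : Prop :=
  (forall t, (t <= T)%N -> E t (phi t)) /\ inH T K Delta /\
  forall x, inOmega T K x -> v x = \sum_(t < T.+1) phi t (x t) + Iint T Delta x.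

Definition inV (T : nat) (K : nat -> set R) (E : nat -> set (R -> R))
    (v : (nat -> R) -> R) : Prop :=
  exists phi Delta, represents T K E phi Delta v.

End Defs.

From Pilot Require Import Defs.
From HB Require Import structures.
From mathcomp Require Import all_boot all_order all_algebra.
From mathcomp Require Import all_classical all_reals all_analysis.
From mathcomp Require Import ring lra.
Import Order.TTheory GRing.Theory Num.Theory.
Import numFieldNormedType.Exports.
Local Open Scope classical_set_scope.
Local Open Scope ring_scope.

(* Write g_t = psi_t - phi_t, so that sum_t g_t(x_t) + I^Delta(x) vanishes on
   Omega.  If K_T contains two points, moving x_T alone shows that g_T is affine
   with slope -Delta_(T-1), which is therefore constant on Omega_(T-1); the last
   period then contributes k x_(T-1) + h = k x_0 + h + k (x_(T-1) - x_0), a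
   constant plus the gain of holding k units throughout, and we descend to T-1.
   If K_T is a singleton, so are all K_t by the cardinality assumption, and every
   function on a singleton is affine.
   Stock additivity turns psi_t = phi_t + k_t X_t + h_t into
   S_t(psi_t) = S_t(phi_t) + k_t x_0 + h_t, and the same descent shows
   sum_t (k_t x_0 + h_t) = 0; in the singleton case stock additivity forces
   K_t = {x_0}, so the constant path x_0 lies in Omega.  Well-definedness of S
   on V is this statement for two representations of the same v. *)

Lemma card_le_subset1 {T} {U : pointedType} {A : set T} {B : set U} :
  (A #<= B)%card -> is_subset1 B -> is_subset1 A.
Proof.
move=> /pcard_leP/injfunPex[f fAB finj] B1 a b Aa Ab.
by apply: finj; rewrite ?inE //; apply: B1; apply: fAB.
Qed.

Lemma card_le_nonempty {T} {U : pointedType} {A : set T} {B : set U} :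
  (A #<= B)%card -> A !=set0 -> B !=set0.
Proof. by move=> /pcard_leP/injfunPex[f fAB _] [a Aa]; exists (f a); apply: fAB. Qed.

Lemma subset1_or_pair {T} (A : set T) :
  is_subset1 A \/ exists a b, [/\ A a, A b & a <> b].
Proof.
have [A1|A1] := pselect (is_subset1 A); [left | right] => //.
apply: contrapT => nopair; apply: A1 => a b Aa Ab.
by apply: contrapT => ab; apply: nopair; exists a, b.
Qed.

Section Paths.
Context {R : realType}.
Implicit Types (x y : nat -> R) (D : forall t : nat, 'rV[R]_t.+1 -> R).

Definition semistatic T (g : nat -> R -> R) (c : R) D x :=
  \sum_(t < T.+1) g t (x t) + c + Iint T D x.

Definition card_nondecreasing (K : nat -> set R) T :=
  forall t, (t < T)%N -> (K t #<= K t.+1)%card.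

Definition extend x (T : nat) (z : R) : nat -> R :=
  fun t => if t == T.+1 then z else x t.

Lemma extend_le x T z t : (t <= T)%N -> extend x T z t = x t.
Proof. by rewrite /extend; case: eqP => // ->; rewrite ltnn. Qed.

Lemma inOmega_extend {K : nat -> set R} {T x z} :
  inOmega T K x -> K T.+1 z -> inOmega T.+1 K (extend x T z).
Proof.
move=> Hx Kz t; rewrite leq_eqVlt => /orP[/eqP->|tT]; first by rewrite /extend eqxx.
by rewrite extend_le //; apply: Hx.
Qed.

Lemma eq_prefix x y t :
  (forall s, (s <= t)%N -> x s = y s) -> Defs.prefix x t = Defs.prefix y t.
Proof. by move=> xy; apply/rowP => i; rewrite !mxE xy // -ltnS ltn_ord. Qed.

Lemma eq_Iint T D x y :
  (forall t, (t <= T)%N -> x t = y t) -> Iint T D x = Iint T D y.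
Proof.
move=> xy; apply: eq_bigr => t _; have tT := ltn_ord t.
rewrite (@eq_prefix x y) ?xy //; first exact: ltnW.
by move=> s st; apply: xy; apply: leq_trans st (ltnW tT).
Qed.

Lemma Iint_recr T D x :
  Iint T.+1 D x = Iint T D x + D T (Defs.prefix x T) * (x T.+1 - x T).
Proof. by rewrite /Iint big_ord_recr. Qed.

Lemma Iint_addr_cst T D (k : R) x :
  Iint T (fun t u => D t u + k) x = Iint T D x + k * (x T - x 0%N).
Proof.
rewrite /Iint -(telescope_sumr _ (leq0n T)) big_mkord mulr_sumr -big_split /=.
by apply: eq_bigr => t _; rewrite mulrDl.
Qed.

Lemma Iint_cst_path T D (c : R) : Iint T D (fun=> c) = 0.
Proof. by rewrite /Iint big1 // => t _; rewrite subrr mulr0. Qed.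

Lemma IintD T D D' x :
  Iint T (fun t u => D t u + D' t u) x = Iint T D x + Iint T D' x.
Proof. by rewrite /Iint -big_split; apply: eq_bigr => t _ /=; rewrite mulrDl. Qed.

Lemma IintB T D D' x :
  Iint T (fun t u => D t u - D' t u) x = Iint T D x - Iint T D' x.
Proof. by rewrite /Iint -sumrB; apply: eq_bigr => t _ /=; rewrite mulrBl. Qed.

Lemma semistatic_sub_eq0 {K : nat -> set R} {T} {phi psi : nat -> R -> R} {D} :
  (forall x, inOmega T K x ->
     \sum_(t < T.+1) phi t (x t) = \sum_(t < T.+1) psi t (x t) + Iint T D x) ->
  forall x, inOmega T K x -> semistatic T (fun t r => psi t r - phi t r) 0 D x = 0.
Proof. by move=> Hid x Hx; rewrite /semistatic sumrB Hid //; ring. Qed.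

End Paths.

Section Affine.
Context {R : realType}.
Implicit Types (A : set R) (f : R -> R).

Definition affine_on A f (k h : R) := forall y, A y -> f y = k * y + h.

Lemma subset1_affine_on {A f} : is_subset1 A -> affine_on A f 0 (f (xget 0 A)).
Proof.
move=> A1 y Ay; rewrite mul0r add0r; congr f.
by apply: A1 => //; apply: xgetPex; exists y.
Qed.

Lemma affine_on_pair_uniq {A f k h k' h' a b} :
  A a -> A b -> a <> b -> affine_on A f k h -> affine_on A f k' h' ->
  k = k' /\ h = h'.
Proof.
move=> Aa Ab ab fkh fkh'.
have kk' : k = k'.
  have : (k - k') * (a - b) =
      (k * a + h) - (k * b + h) - ((k' * a + h') - (k' * b + h')) by ring.
  rewrite -(fkh a Aa) -(fkh b Ab) -(fkh' a Aa) -(fkh' b Ab) subrr => /eqP.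
  by rewrite mulf_eq0 !subr_eq0 => /orP[/eqP|/eqP/ab].
split=> //; apply: (@addrI _ (k' * a)).
by rewrite -kk' -(fkh a Aa) kk' -(fkh' a Aa).
Qed.

End Affine.

Section Decomposition.
Context {R : realType} {x0 : R} {K : nat -> set R}.
Hypothesis K0 : K 0%N = [set x0].
Implicit Types (g : nat -> R -> R) (c : R) (D : forall t : nat, 'rV[R]_t.+1 -> R)
  (x : nat -> R).

Lemma card_nondecreasingW {T} : card_nondecreasing K T.+1 -> card_nondecreasing K T.
Proof. by move=> HK t tT; apply: HK; apply: ltnW. Qed.

Lemma nonempty_le {T} : card_nondecreasing K T -> forall t, (t <= T)%N -> K t !=set0.
Proof.
move=> HK; elim=> [|t IH] tT; first by exists x0; rewrite K0.
exact: card_le_nonempty (HK t tT) (IH (ltnW tT)).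
Qed.

Lemma subset1_le {T} : card_nondecreasing K T -> is_subset1 (K T) ->
  forall t, (t <= T)%N -> is_subset1 (K t).
Proof.
elim: T => [|T IH] HK KT t; first by rewrite leqn0 => /eqP->.
rewrite leq_eqVlt ltnS => /orP[/eqP->//|].
exact: IH (card_nondecreasingW HK) (card_le_subset1 (HK T (ltnSn T)) KT) t.
Qed.

Lemma inOmega_xget {T} : card_nondecreasing K T -> inOmega T K (fun t => xget 0 (K t)).
Proof. by move=> HK t tT; apply: xgetPex; apply: nonempty_le HK t tT. Qed.

Lemma inOmega_x0 {T x} : inOmega T K x -> x 0%N = x0.
Proof. by move=> /(_ 0%N (leq0n T)); rewrite K0. Qed.

Lemma semistatic_extend T g c D x (z : R) :
  semistatic T.+1 g c D (extend x T z) =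
  semistatic T g c D x + g T.+1 z + D T (Defs.prefix x T) * (z - x T).
Proof.
have ext_le := @extend_le R x T z.
rewrite /semistatic big_ord_recr Iint_recr /= (eq_Iint _ _ _ x ext_le).
rewrite (@eq_prefix _ _ x) => [|s sT]; last exact: ext_le.
rewrite (eq_bigr (fun t : 'I_T.+1 => g t (x t))) => [|t _]; last first.
  by rewrite ext_le // -ltnS ltn_ord.
by rewrite (ext_le T) // /extend eqxx; ring.
Qed.

Lemma affine_on_last_period {T g c D x} :
  (forall y, inOmega T.+1 K y -> semistatic T.+1 g c D y = 0) -> inOmega T K x ->
  affine_on (K T.+1) (g T.+1) (- D T (Defs.prefix x T))
    (D T (Defs.prefix x T) * x T - semistatic T g c D x).
Proof.
move=> Hid Hx z Kz; have := Hid _ (inOmega_extend Hx Kz).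
by rewrite semistatic_extend => e; lra.
Qed.

Lemma semistatic_eq0_drop_last {T g c D k h a b} :
  K T.+1 a -> K T.+1 b -> a <> b -> affine_on (K T.+1) (g T.+1) k h ->
  (forall y, inOmega T.+1 K y -> semistatic T.+1 g c D y = 0) ->
  forall x, inOmega T K x ->
    semistatic T g (c + k * x0 + h) (fun t u => D t u + k) x = 0.
Proof.
move=> Ka Kb ab gkh Hid x Hx.
have [-> ->] := affine_on_pair_uniq Ka Kb ab gkh (affine_on_last_period Hid Hx).
by rewrite /semistatic Iint_addr_cst (inOmega_x0 Hx); ring.
Qed.

Lemma subset1_affine_decomposition {T} g :
  card_nondecreasing K T -> is_subset1 (K T) ->
  exists k h : nat -> R, forall t, (t <= T)%N -> affine_on (K t) (g t) (k t) (h t).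
Proof.
move=> HK KT; exists (fun=> 0), (fun t => g t (xget 0 (K t))) => t tT /=.
exact: subset1_affine_on (subset1_le HK KT t tT).
Qed.

Lemma affine_decomposition {T g c D} :
  card_nondecreasing K T ->
  (forall x, inOmega T K x -> semistatic T g c D x = 0) ->
  exists k h : nat -> R, forall t, (t <= T)%N -> affine_on (K t) (g t) (k t) (h t).
Proof.
elim: T c D => [|T IH] c D HK Hid.
  by apply: subset1_affine_decomposition => //; rewrite K0 => ? ? -> ->.
have [KT1|[a [b [Ka Kb ab]]]] := subset1_or_pair (K T.+1).
  exact: subset1_affine_decomposition.
have HK' := card_nondecreasingW HK.
have [kT [hT gT1]] : exists kT hT, affine_on (K T.+1) (g T.+1) kT hT.
  by do 2 eexists; exact: affine_on_last_period Hid (inOmega_xget HK').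
have [k [h gkh]] := IH _ _ HK' (semistatic_eq0_drop_last Ka Kb ab gT1 Hid).
exists (fun t => if t == T.+1 then kT else k t).
exists (fun t => if t == T.+1 then hT else h t).
move=> t; rewrite leq_eqVlt ltnS => /orP[/eqP->|tT]; first by rewrite eqxx.
by rewrite ltn_eqF //; apply: gkh.
Qed.

Lemma subset1_sum_affine_at_x0 {T g c D k h} :
  card_nondecreasing K T -> is_subset1 (K T) ->
  (forall t, (t <= T)%N -> is_subset1 (K t) -> K t x0) ->
  (forall t, (t <= T)%N -> affine_on (K t) (g t) (k t) (h t)) ->
  (forall x, inOmega T K x -> semistatic T g c D x = 0) ->
  \sum_(t < T.+1) (k t * x0 + h t) + c = 0.
Proof.
move=> HK KT Kx0 gkh Hid.
have Hx0 : inOmega T K (fun=> x0).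
  by move=> t tT; exact: Kx0 t tT (subset1_le HK KT t tT).
have := Hid _ Hx0; rewrite /semistatic Iint_cst_path addr0 => e.
rewrite -[RHS]e; congr (_ + _).
apply: eq_bigr => t _; have tT : (t <= T)%N := ltn_ord t.
by rewrite gkh //; exact: Hx0 _ tT.
Qed.

Lemma sum_affine_at_x0 {T g c D k h} :
  card_nondecreasing K T ->
  (forall t, (t <= T)%N -> is_subset1 (K t) -> K t x0) ->
  (forall t, (t <= T)%N -> affine_on (K t) (g t) (k t) (h t)) ->
  (forall x, inOmega T K x -> semistatic T g c D x = 0) ->
  \sum_(t < T.+1) (k t * x0 + h t) + c = 0.
Proof.
elim: T c D => [|T IH] c D HK Kx0 gkh Hid.
  by apply: subset1_sum_affine_at_x0 Hid => //; rewrite K0 => ? ? -> ->.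
have [KT1|[a [b [Ka Kb ab]]]] := subset1_or_pair (K T.+1).
  exact: subset1_sum_affine_at_x0 Hid.
have Hid' := semistatic_eq0_drop_last Ka Kb ab (gkh _ (leqnn _)) Hid.
have := IH _ _ (card_nondecreasingW HK) (fun t tT => Kx0 t (leqW tT))
  (fun t tT => gkh t (leqW tT)) Hid'.
by move=> e; rewrite big_ord_recr /= -[RHS]e; ring.
Qed.

End Decomposition.

Section StockAdditivity.
Context {R : realType}.
Implicit Types (K : set R) (E : set (R -> R)) (f : R -> R) (p : (R -> R) -> R).

Definition affine_shift K f (k h : R) : R -> R :=
  fun y => f y + k * Xfun K y + cstK K h y.

Lemma inC_affine_shift {K f f' k h} :
  inC K f -> inC K f' -> affine_on K (fun y => f' y - f y) k h ->
  f' = affine_shift K f k h.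
Proof.
move=> [_ [_ f0]] [_ [_ f'0]] ff'; apply: funext => y.
rewrite /affine_shift /Xfun /cstK; have [Ky|Ky] := pselect (K y).
  by rewrite mem_set // -addrA -ff' //; ring.
by rewrite memNset // f0 // f'0 //; ring.
Qed.

Lemma stock_additive_cst {x0 K E p f b} :
  stock_additive x0 K E p -> E f -> p (f \+ cstK K b) = p f + b.
Proof.
move=> [_ padd] Ef; have := padd f 0 b Ef; rewrite mul0r addr0 => <-.
by congr p; apply: funext => y /=; rewrite mul0r addr0.
Qed.

Lemma stock_additive_subset1 {x0 K E p} :
  E (fun=> 0) -> stock_additive x0 K E p -> is_subset1 K -> K !=set0 -> K x0.
Proof.
move=> E0 [p0 padd] K1 [c Kc].
have XK : (fun y => 0 + 1 * Xfun K y + cstK K 0 y) =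
           (fun y => 0 + 0 * Xfun K y + cstK K c y).
  apply: funext => y; rewrite /Xfun /cstK.
  by case: ifPn => [/set_mem/K1/(_ Kc)->|_]; ring.
have := padd _ 1 0 E0; rewrite XK padd // p0 => e.
by have -> : x0 = c by lra.
Qed.

End StockAdditivity.

Section ExtendedPrice.
Context {R : realType}.
Variables (T : nat) (K : nat -> set R) (E : nat -> set (R -> R))
  (S : nat -> (R -> R) -> R).

Definition decomposes (phi : nat -> R -> R) (D : forall t : nat, 'rV[R]_t.+1 -> R)
    (v : (nat -> R) -> R) :=
  (forall t, (t <= T)%N -> E t (phi t)) /\
  forall x, inOmega T K x -> v x = \sum_(t < T.+1) phi t (x t) + Iint T D x.

(* [xget] makes this 0 outside V. *)
Definition extended_price (v : (nat -> R) -> R) : R :=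
  xget 0 [set s | exists phi D, decomposes phi D v /\ s = \sum_(t < T.+1) S t (phi t)].

End ExtendedPrice.

Section Prices.
Context {R : realType} {T : nat} {x0 : R} {K : nat -> set R}
  {E : nat -> set (R -> R)} {S : nat -> (R -> R) -> R}.
Hypotheses (K0 : K 0%N = [set x0]) (HK : card_nondecreasing K T)
  (HE : forall t, (t <= T)%N -> good_space (K t) (E t))
  (HS : forall t, (t <= T)%N -> stock_additive x0 (K t) (E t) (S t)).

Lemma sum_stock_eq {phi psi : nat -> R -> R} {D : forall t : nat, 'rV[R]_t.+1 -> R} :
  (forall t, (t <= T)%N -> E t (phi t)) -> (forall t, (t <= T)%N -> E t (psi t)) ->
  (forall x, inOmega T K x ->
     \sum_(t < T.+1) phi t (x t) = \sum_(t < T.+1) psi t (x t) + Iint T D x) ->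
  \sum_(t < T.+1) S t (phi t) = \sum_(t < T.+1) S t (psi t).
Proof.
move=> Ephi Epsi Hid; have Hg := semistatic_sub_eq0 Hid.
have [k [h gkh]] := affine_decomposition K0 HK Hg.
have Kx0 t : (t <= T)%N -> is_subset1 (K t) -> K t x0.
  move=> tT K1; have [_ [E0 _ _ _ _]] := HE t tT.
  exact: stock_additive_subset1 E0 (HS t tT) K1 (nonempty_le K0 HK t tT).
have := sum_affine_at_x0 K0 HK Kx0 gkh Hg; rewrite addr0 => sum0.
transitivity (\sum_(t < T.+1) (S t (phi t) + (k t * x0 + h t))).
  by rewrite big_split /= sum0 addr0.
apply: eq_bigr => t _.
have tT : (t <= T)%N := ltn_ord t; have [inCE _] := HE t tT.
rewrite (inC_affine_shift (inCE _ (Ephi t tT)) (inCE _ (Epsi t tT)) (gkh t tT)).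
by rewrite /affine_shift (HS t tT).2 ?addrA //; exact: Ephi.
Qed.

Lemma extended_priceE {phi D v} :
  decomposes T K E phi D v -> extended_price T K E S v = \sum_(t < T.+1) S t (phi t).
Proof.
move=> dec; have : [set s | exists phi D, decomposes T K E phi D v /\
    s = \sum_(t < T.+1) S t (phi t)] (extended_price T K E S v).
  by apply: xgetPex; exists (\sum_(t < T.+1) S t (phi t)), phi, D.
move=> [phi' [D' [[Ephi' Hv'] ->]]]; have [Ephi Hv] := dec.
apply: (@sum_stock_eq _ _ (fun t u => D t u - D' t u)) => // x Hx.
by rewrite IintB; move: (Hv x Hx) (Hv' x Hx) => ->; lra.
Qed.

Lemma extended_price_cash_additive {phi D v} (k : R) :
  decomposes T K E phi D v ->
  extended_price T K E S (fun x => v x + k) = extended_price T K E S v + k.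
Proof.
move=> [Ephi Hv].
pose phi' t := if t == 0%N then phi 0%N \+ cstK (K 0%N) k else phi t.
have dec' : decomposes T K E phi' D (fun x => v x + k).
  split=> [t tT|x Hx].
    rewrite /phi'; case: eqP => [->|_]; last exact: Ephi.
    by have [_ [_ _ _ _ Ecst]] := HE 0%N (leq0n T); apply: Ecst; apply: Ephi.
  rewrite Hv // !big_ord_recl /phi' /= /cstK mem_set; first ring.
  exact: Hx 0%N (leq0n T).
rewrite (extended_priceE dec') (extended_priceE (conj Ephi Hv)) !big_ord_recl /phi' /=.
by rewrite (stock_additive_cst (HS 0%N (leq0n T))) //; [ring | exact: Ephi].
Qed.

Lemma extended_price_integral_additive {phi D v} D' :
  decomposes T K E phi D v ->
  extended_price T K E S (fun x => v x + Iint T D' x) = extended_price T K E S v.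
Proof.
move=> [Ephi Hv]; rewrite (extended_priceE (conj Ephi Hv)).
apply: (@extended_priceE _ (fun t u => D t u + D' t u)); split=> // x Hx.
by rewrite IintD Hv // addrA.
Qed.

End Prices.

Theorem lemmaA2 (R : realType) (T : nat) (x0 : R) (K : nat -> set R)
    (E : nat -> set (R -> R))
    (phi psi : nat -> R -> R) (Delta : forall t : nat, 'rV[R]_t.+1 -> R) :
  (1 <= T)%N ->
  K 0%N = [set x0] ->
  (forall t, (t <= T)%N -> closed (K t)) ->
  (forall t, (t < T)%N -> (K t #<= K t.+1)%card) ->
  (forall t, (t <= T)%N -> good_space (K t) (E t)) ->
  (forall t, (t <= T)%N -> E t (phi t)) ->
  (forall t, (t <= T)%N -> E t (psi t)) ->
  inH T K Delta ->
  (forall x, inOmega T K x ->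
     \sum_(t < T.+1) phi t (x t)
     = \sum_(t < T.+1) psi t (x t) + Iint T Delta x) ->
  (exists k h : nat -> R, forall t, (t <= T)%N ->
     forall y, K t y -> psi t y = phi t y + k t * y + h t)
  /\
  (forall S : nat -> (R -> R) -> R,
     (forall t, (t <= T)%N -> stock_additive x0 (K t) (E t) (S t)) ->
     \sum_(t < T.+1) S t (phi t) = \sum_(t < T.+1) S t (psi t)
     /\
     exists SV : ((nat -> R) -> R) -> R,
       [/\ (* well defined: independent of the representation *)
           (forall v phi' Delta', represents T K E phi' Delta' v ->
              SV v = \sum_(t < T.+1) S t (phi' t)),
           (* cash additive *)
           (forall v (k : R), inV T K E v ->
              SV (fun x => v x + k) = SV v + k) &
           (* integral additive *)
           (forall v Delta', inV T K E v -> inH T K Delta' ->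
              SV (fun x => v x + Iint T Delta' x) = SV v)]).
Proof.
move=> _ K0 _ HK HE Ephi Epsi _ Hid.
have [k [h gkh]] := affine_decomposition K0 HK (semistatic_sub_eq0 Hid).
split.
  by exists k, h => t tT y Ky; rewrite -addrA -gkh //; ring.
move=> S HS; split; first exact: (sum_stock_eq K0 HK HE HS Ephi Epsi Hid).
exists (extended_price T K E S); split.
- move=> v phi' D' [Ephi' [_ Hv]].
  exact: (extended_priceE K0 HK HE HS (conj Ephi' Hv)).
- move=> v k' [phi' [D' [Ephi' [_ Hv]]]].
  exact: (extended_price_cash_additive K0 HK HE HS k' (conj Ephi' Hv)).
- move=> v D' [phi' [D'' [Ephi' [_ Hv]]]] _.
  exact: (extended_price_integral_additive K0 HK HE HS D' (conj Ephi' Hv)).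
Qed.
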